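(* Let $n\ge 4$, let $K'\subseteq[k]$ with $|K'|\ge n$, let $\pi$ assign to each $n$-element subset $S\subseteq[k]$ a string $\pi(S)$ of length $n$ that is an ordering of $S$, and suppose every $(n-1)$-element subset $R\subseteq K'$ is semi-frozen, with a fixed choice of semi-freezing function $h_R$ and wildcard index $w_R$. Then for every $Q\subseteq K'$ with $|Q|=n-2$ there exists $T_Q\subseteq Q$ with $|T_Q|=n-4$ such that $h_R(t)=h_{R'}(t)$ for all $t\in T_Q$ and all $(n-1)$-element sets $R,R'\subseteq K'$ containing $Q$.
   Context: $[k]=\{1,\dots,k\}$; $\pi(S)[i]$ is the letter at position $i\in[n]$ of $\pi(S)$. For a set $R\subseteq[k]$, $\mathcal U_R$ is the set of all sets $S\subseteq[k]$ with $R\subset S$ and $|S|=|R|+1$. A set $R$ with $|R|=n-1$ is semi-frozen with semi-freezing function $h_R$ and wildcard index $w_R$ if $h_R:R\to[n]$ is one-to-one, $w_R$ is the unique index of $[n]$ not in the image of $h_R$, and for every $r\in R$ and every $S\in\mathcal U_R$, either $\pi(S)[h_R(r)]=r$ or $\pi(S)[w_R]=r$. *)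

(* Letters [k] are modelled by 'I_k (0-based relabeling of
   {1,...,k}); positions [n] by 'I_n. *)
From mathcomp Require Import all_boot.
Set Implicit Arguments. Unset Strict Implicit. Unset Printing Implicit Defensive.

(* pi S is the string pi(S) of length n : position i |-> letter (pi S i). *)
Definition string_assignment (k n : nat) := {set 'I_k} -> 'I_n -> 'I_k.

Definition is_ordering (k n : nat) (S : {set 'I_k}) (s : 'I_n -> 'I_k) : Prop :=
  injective s /\ forall x : 'I_k, (x \in S) = (x \in [set s i | i : 'I_n]).

Definition valid_assignment (k n : nat) (pi : string_assignment k n) : Prop :=
  forall S : {set 'I_k}, #|S| = n -> is_ordering S (pi S).

Definition in_U (k : nat) (R S : {set 'I_k}) : bool :=
  (R \proper S) && (#|S| == #|R|.+1).

Definition semi_frozen (k n : nat) (pi : string_assignment k n)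
    (R : {set 'I_k}) (h : 'I_k -> 'I_n) (w : 'I_n) : Prop :=
  [/\ #|R| = n.-1,
      {in R &, injective h},
      (forall i : 'I_n, (i \notin [set h r | r in R]) <-> i = w) &
      forall r, r \in R -> forall S, in_U R S ->
        pi S (h r) = r \/ pi S w = r].

From mathcomp Require Import all_boot.
From mathcomp Require Import zify.

Set Implicit Arguments.
Unset Strict Implicit.
Unset Printing Implicit Defensive.

(* Let R1, R2 be two distinct semi-frozen (n-1)-sets containing
   the (n-2)-set Q.  Then S = R1 ∪ R2 has n elements and lies in U_R1 and in
   U_R2.  Reading the letter of pi(S) at a position h_R2(t) = h_R1(u) with
   t, u in R1 ∩ R2 forces t = u: a letter of R sitting at a position h_R(r)
   must be r itself, since the wildcard position is not in the image of h_R.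
   Hence the family (h_R) restricted to Q, R ranging over the admissible sets,
   is "cross-injective": h_R(t) = h_R'(u) implies t = u.
   A purely combinatorial counting lemma then shows that for a cross-injective
   family of maps Q -> V, the set of points of Q where the family is not
   constant has at most |V| - |Q| elements; here |V| = n and |Q| = n - 2, so
   at most 2 points of Q are unstable, and any (n-4)-subset T_Q of the stable
   points satisfies the theorem. *)

Section SemiFrozenPositions.

Variables (k n : nat) (pi : string_assignment k n).

Lemma semi_frozen_wildcard (R : {set 'I_k}) (h : 'I_k -> 'I_n) (w : 'I_n) r :
  semi_frozen pi R h w -> r \in R -> h r != w.
Proof.
case=> _ _ himage _ rR; apply/eqP => hrw.
by have := proj2 (himage (h r)) hrw; rewrite imset_f.
Qed.

Lemma semi_frozen_letter (R S : {set 'I_k}) (h : 'I_k -> 'I_n) (w : 'I_n) r x :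
  semi_frozen pi R h w -> in_U R S -> injective (pi S) ->
  r \in R -> x \in R -> pi S (h r) = x -> x = r.
Proof.
move=> sfR RS sinj rR xR sx.
have hr_w := semi_frozen_wildcard sfR rR.
case: sfR => _ hinj _ placed.
case: (placed x xR S RS) => [sxx | swx].
- by apply: hinj => //; apply: sinj; rewrite sxx sx.
- by move: hr_w; rewrite (sinj _ _ (etrans swx (esym sx))) eqxx.
Qed.

Lemma semi_frozen_pair_cross (R1 R2 : {set 'I_k}) (h1 h2 : 'I_k -> 'I_n)
    (w1 w2 : 'I_n) :
  semi_frozen pi R1 h1 w1 -> semi_frozen pi R2 h2 w2 ->
  in_U R1 (R1 :|: R2) -> in_U R2 (R1 :|: R2) ->
  is_ordering (R1 :|: R2) (pi (R1 :|: R2)) ->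
  {in R1 :&: R2 &, forall t u, h2 t = h1 u -> t = u}.
Proof.
move=> sf1 sf2 U1 U2 [sinj smem] t u /setIP [tR1 tR2] /setIP [uR1 uR2] htu.
have letterS : pi (R1 :|: R2) (h2 t) \in R1 :|: R2.
  by rewrite smem; apply/imsetP; exists (h2 t).
case/setUP: letterS => [xR1 | xR2].
- have xu := semi_frozen_letter sf1 U1 sinj uR1 xR1 (congr1 _ (esym htu)).
  by apply/esym/(semi_frozen_letter sf2 U2 sinj tR2 uR2); rewrite -xu.
- have xt := semi_frozen_letter sf2 U2 sinj tR2 xR2 erefl.
  by apply: (semi_frozen_letter sf1 U1 sinj uR1 tR1); rewrite -xt htu.
Qed.

End SemiFrozenPositions.

Lemma union_of_neighbours (T : finType) (m : nat) (Q R1 R2 : {set T}) :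
  #|Q| = m -> #|R1| = m.+1 -> #|R2| = m.+1 ->
  Q \subset R1 -> Q \subset R2 -> R1 != R2 ->
  R1 \proper R1 :|: R2 /\ #|R1 :|: R2| = m.+2.
Proof.
move=> cQ c1 c2 QR1 QR2 R12.
have cI : #|R1 :&: R2| = m.
  have lower : m <= #|R1 :&: R2|.
    by rewrite -cQ subset_leq_card // subsetI QR1 QR2.
  have upper : #|R1 :&: R2| < #|R1|.
    apply: proper_card; rewrite properEneq subsetIl andbT.
    apply: contra R12 => /eqP I1; rewrite eqEcard c1 c2 leqnn andbT.
    by rewrite -I1 subsetIr.
  lia.
have cU := cardsUI R1 R2.
by rewrite properEcard subsetUl; split; lia.
Qed.

Lemma semi_frozen_core_cross (k n : nat) (pi : string_assignment k n)
    (h : {set 'I_k} -> 'I_k -> 'I_n) (w : {set 'I_k} -> 'I_n)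
    (Q R1 R2 : {set 'I_k}) :
  valid_assignment pi -> 2 <= n -> #|Q| = n - 2 ->
  Q \subset R1 -> Q \subset R2 ->
  semi_frozen pi R1 (h R1) (w R1) -> semi_frozen pi R2 (h R2) (w R2) ->
  {in Q &, forall t u, h R2 t = h R1 u -> t = u}.
Proof.
move=> valid n2 cQ QR1 QR2 sf1 sf2 t u tQ uQ.
have QR12 : Q \subset R1 :&: R2 by rewrite subsetI QR1 QR2.
have [c1 c2] : #|R1| = (n - 2).+1 /\ #|R2| = (n - 2).+1.
  by case: sf1 => c1 _ _ _; case: sf2 => c2 _ _ _; split; lia.
have [-> | R12] := eqVneq R1 R2.
  by case: sf2 => _ hinj _ _; apply: hinj; apply: (subsetP QR2).
have [R1U cU] := union_of_neighbours cQ c1 c2 QR1 QR2 R12.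
have R21 : R2 != R1 by rewrite eq_sym.
have [R2U _] := union_of_neighbours cQ c2 c1 QR2 QR1 R21.
have U1 : in_U R1 (R1 :|: R2) by rewrite /in_U R1U cU c1 eqxx.
have U2 : in_U R2 (R1 :|: R2) by rewrite /in_U cU c2 eqxx setUC R2U.
have cn : #|R1 :|: R2| = n by lia.
by apply: (semi_frozen_pair_cross sf1 sf2 U1 U2 (valid _ cn));
  apply: (subsetP QR12).
Qed.

Section CrossInjectiveFamily.

Variables (I T V : finType) (A : {set I}) (Q : {set T}) (g : I -> T -> V).

Definition unstable : {set T} :=
  [set t in Q | [exists i in A, exists j in A, g i t != g j t]].

Hypothesis g_cross :
  forall i j, i \in A -> j \in A -> {in Q &, forall t u, g i t = g j u -> t = u}.

(* Every unstable point takes, under a suitable member of the family, a value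
   outside the image g i0 (Q); these values are pairwise distinct. *)
Lemma unstable_card i0 : i0 \in A -> #|unstable| + #|Q| <= #|V|.
Proof.
move=> i0A.
pose f t := g (odflt i0 [pick i in A | g i t != g i0 t]) t.
have f_spec t : t \in unstable ->
    exists2 i, i \in A & g i t != g i0 t /\ f t = g i t.
  rewrite inE => /andP [_ /existsP [i /andP [iA /existsP [j /andP [jA ne]]]]].
  rewrite /f; case: pickP => [i' /andP [i'A ne'] | none]; first by exists i'.
  move: (none i) (none j); rewrite iA jA /= => /negbFE/eqP ei /negbFE/eqP ej.
  by move: ne; rewrite ei ej eqxx.
have NQ : unstable \subset Q by apply/subsetP => t; rewrite inE => /andP [].
have f_inj : {in unstable &, injective f}.
  move=> t u tN uN; have [it itA [_ ->]] := f_spec t tN.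
  have [iu iuA [_ ->]] := f_spec u uN.
  by apply: g_cross; rewrite ?(subsetP NQ).
have f_fresh : f @: unstable \subset ~: (g i0 @: Q).
  apply/subsetP => _ /imsetP [t tN ->]; rewrite inE.
  have [i iA [ne ->]] := f_spec t tN.
  apply/imsetP => -[u uQ eq_tu].
  have tu : t = u := g_cross iA i0A (subsetP NQ t tN) uQ eq_tu.
  by move: ne; rewrite eq_tu -tu eqxx.
have g0_inj : {in Q &, injective (g i0)} by exact: g_cross.
have := cardsC (g i0 @: Q); rewrite (card_in_imset g0_inj) => cC.
have := subset_leq_card f_fresh; rewrite (card_in_imset f_inj); lia.
Qed.

End CrossInjectiveFamily.

Lemma exists_subset_card (T : finType) (B : {set T}) (m : nat) :
  m <= #|B| -> exists2 C : {set T}, C \subset B & #|C| = m.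
Proof.
rewrite -bin_gt0 -cards_draws card_gt0 => /set0Pn [C].
by rewrite inE => /andP [CB /eqP cC]; exists C.
Qed.

Theorem lemma3p9 (k n : nat) (K' : {set 'I_k}) (pi : string_assignment k n)
    (h : {set 'I_k} -> 'I_k -> 'I_n) (w : {set 'I_k} -> 'I_n) :
  4 <= n ->
  n <= #|K'| ->
  valid_assignment pi ->
  (forall R : {set 'I_k}, R \subset K' -> #|R| = n.-1 ->
     semi_frozen pi R (h R) (w R)) ->
  forall Q : {set 'I_k}, Q \subset K' -> #|Q| = n - 2 ->
    exists T : {set 'I_k},
      [/\ T \subset Q, #|T| = n - 4 &
        forall R R' : {set 'I_k},
          Q \subset R -> R \subset K' -> #|R| = n.-1 ->
          Q \subset R' -> R' \subset K' -> #|R'| = n.-1 ->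
          forall t, t \in T -> h R t = h R' t].
Proof.
move=> n4 nK valid sf Q QK cQ.
pose A := [set R : {set 'I_k} | [&& Q \subset R, R \subset K' & #|R| == n.-1]].
have cross R1 R2 : R1 \in A -> R2 \in A ->
    {in Q &, forall t u, h R1 t = h R2 u -> t = u}.
  rewrite !inE => /and3P [QR1 R1K /eqP c1] /and3P [QR2 R2K /eqP c2].
  apply: (semi_frozen_core_cross valid _ cQ QR2 QR1); [lia | exact: sf ..].
have [R0 R0A] : exists R0, R0 \in A.
  have [x /setDP [xK xQ]] : exists x, x \in K' :\: Q.
    by apply/set0Pn; rewrite -card_gt0 cardsD (setIidPr QK); lia.
  exists (x |: Q); rewrite inE subsetUr subUset sub1set xK QK cardsU1 xQ cQ.
  by apply/eqP; lia.
have := unstable_card cross R0A; rewrite card_ord => cN.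
have stable_card : n - 4 <= #|Q :\: unstable A Q h|.
  have := subset_leq_card (subsetIr Q (unstable A Q h)); rewrite cardsD; lia.
have [T TS cT] := exists_subset_card stable_card.
exists T; split => [|//|R R' QR RK cR QR' R'K cR' t tT].
  exact: subset_trans TS (subsetDl _ _).
have /setDP [tQ tN] := subsetP TS t tT.
apply/eqP; apply: contraNT tN => ne; rewrite inE tQ.
by apply/existsP; exists R; rewrite inE QR RK cR eqxx; apply/existsP; exists R';
  rewrite inE QR' R'K cR' eqxx.
Qed.
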